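(* Let $n\geqslant 2$, $N=\{1,\ldots,n\}$ and $\alpha\in\mathbb{R}$. Write $\mathscr{BG}_\alpha(n)=\alpha u_{\{n\}}+\mathscr{C}_\alpha(n)$, where $\mathscr{C}_\alpha(n)=\{v\in\mathbb{R}^{2^N\setminus\{\varnothing,N\}}:\sum_{S\in\mathscr{B}}\lambda^{\mathscr{B}}_Sv(S)\leqslant 0\ \forall \mathscr{B}\in\mathfrak{B}^*(n)\}$, and $\mathscr{C}_\alpha(n)=\mathsf{Lin}(\mathscr{C}_\alpha(n))\oplus\mathscr{C}^0_\alpha(n)$, where $\mathsf{Lin}$ denotes the lineality space and $\mathscr{C}^0_\alpha(n)$ consists of the elements of $\mathscr{C}_\alpha(n)$ whose coordinates for $\{1\},\ldots,\{n-1\}$ are zero. Then the extremal rays of $\mathscr{BG}_\alpha(n)$ (in this decomposition) are: (i) the $2n-2$ rays $w_1,\ldots,w_{n-1},-w_1,\ldots,-w_{n-1}$ of the lineality space, where $w_i=\sum_{S\ni i,S\not\ni n}\delta_S-\sum_{S\not\ni i,S\ni n}\delta_S$; (ii) the $2^n-n-2$ rays $r_S=-\delta_S$ for $S\subsetneq N$, $|S|>1$; (iii) the $n$ rays $r_i=\sum_{S\ni i,\,S\not\ni n,\,|S|>1}\delta_S-\sum_{S\not\ni i,\,S\ni n}\delta_S$ for $i\in N\setminus\{n\}$, and $r_n=-\delta_{\{n\}}$. This yields in total $2^n+2n-4$ extremal rays.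
   Context: A game on $N$ is a map $v:2^N\to\mathbb{R}$ with $v(\varnothing)=0$. For nonempty $S$, $\delta_S(T)=1$ if $T=S$ and $0$ otherwise; $u_S(T)=1$ if $T\supseteq S$ and $0$ otherwise (all restricted to coordinates $T\neq\varnothing,N$). A collection $\mathscr{B}$ of nonempty subsets of $N$ is balanced if there exist positive weights $(\lambda_S)_{S\in\mathscr{B}}$ with $\sum_{S\in\mathscr{B},S\ni i}\lambda_S=1$ for all $i$; minimal balanced if no proper subcollection is balanced, with unique weights $\lambda^{\mathscr{B}}_S$. $\mathfrak{B}^*(n)$ is the set of minimal balanced collections on $N$ other than $\{N\}$. $\mathscr{BG}_\alpha(n)$ is the set of games with $v(N)=\alpha$ and $\sum_{S\in\mathscr{B}}\lambda^{\mathscr{B}}_S v(S)\leqslant\alpha$ for all $\mathscr{B}\in\mathfrak{B}^*(n)$, viewed in $\mathbb{R}^{2^N\setminus\{\varnothing,N\}}$. *)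

From HB Require Import structures.
From mathcomp Require Import all_boot all_order all_algebra.
From mathcomp Require Import reals.
Set Implicit Arguments. Unset Strict Implicit. Unset Printing Implicit Defensive.
Import Order.TTheory GRing.Theory Num.Theory.
Local Open Scope ring_scope.

(* Players N = {1,...,n} are encoded as 'I_n; player n is the ordinal n.-1. *)
Lemma last_player_lt (n : nat) : (1 < n)%N -> (n.-1 < n)%N.
Proof. by case: n. Qed.

Definition lastp (n : nat) (hn : (1 < n)%N) : 'I_n := Ordinal (last_player_lt hn).

Notation vec R n := {ffun {set 'I_n} -> R^o}.

Section Games.
Variables (R : realType) (n : nat).

(* Vectors of R^{2^N \ {emptyset, N}} are encoded as finite functions on
   {set 'I_n} whose coordinates at set0 and setT are 0. *)
Local Notation vec := {ffun {set 'I_n} -> R^o}.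

Definition restricted (x : vec) : Prop := x set0 = 0 /\ x setT = 0.

Definition balancing_weights (B : {set {set 'I_n}}) (lam : {set 'I_n} -> R) : Prop :=
  (forall S, S \in B -> 0 < lam S) /\
  (forall i : 'I_n, \sum_(S in B | i \in S) lam S = 1).

Definition balanced (B : {set {set 'I_n}}) : Prop :=
  (forall S, S \in B -> S != set0) /\ exists lam, balancing_weights B lam.

Definition minimal_balanced (B : {set {set 'I_n}}) : Prop :=
  balanced B /\ forall B' : {set {set 'I_n}}, B' \proper B -> ~ balanced B'.

Definition Bstar (B : {set {set 'I_n}}) : Prop :=
  minimal_balanced B /\ B != [set setT].

Definition game_of (alpha : R) (x : vec) : vec :=
  [ffun T : {set 'I_n} => if T == setT then alpha else if T == set0 then 0 else x T].

(* BG_alpha(n), viewed in R^{2^N \ {emptyset, N}}.  The weights lambda^B are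
   unique for minimal balanced B; we quantify over all balancing weights. *)
Definition BG (alpha : R) (x : vec) : Prop :=
  restricted x /\
  forall B lam, Bstar B -> balancing_weights B lam ->
    \sum_(S in B) lam S * game_of alpha x S <= alpha.

Definition Ccone (x : vec) : Prop :=
  restricted x /\
  forall B lam, Bstar B -> balancing_weights B lam ->
    \sum_(S in B) lam S * x S <= 0.

Definition Lin (K : vec -> Prop) (x : vec) : Prop := K x /\ K (- x).

Definition extreme_ray (K : vec -> Prop) (x : vec) : Prop :=
  K x /\ x != 0 /\
  forall y z, K y -> K z -> x = y + z ->
    exists a b : R, [/\ 0 <= a, 0 <= b, y = a *: x & z = b *: x].

Variable p : 'I_n. (* the player n *)

Definition C0 (x : vec) : Prop :=
  Ccone x /\ forall i : 'I_n, i != p -> x [set i] = 0.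

Definition delta (S : {set 'I_n}) : vec :=
  [ffun T : {set 'I_n} => ((T == S) && (T != set0) && (T != setT))%:R].

Definition u_last : vec :=
  [ffun T : {set 'I_n} => ((p \in T) && (T != setT))%:R].

Definition w (i : 'I_n) : vec :=
  [ffun T : {set 'I_n} => ((i \in T) && (p \notin T))%:R - ((i \notin T) && (p \in T))%:R].

Definition r_player (i : 'I_n) : vec :=
  if i == p then - delta [set p]
  else [ffun T : {set 'I_n} => ((i \in T) && (p \notin T) && (1 < #|T|)%N)%:R
                  - ((i \notin T) && (p \in T))%:R].

Definition gen (k : {set 'I_n} + 'I_n) : vec :=
  match k with inl A => - delta A | inr i => r_player i end.

Definition valid_index (k : {set 'I_n} + 'I_n) : bool :=
  match k with inl A => (1 < #|A|)%N && (A != setT) | inr _ => true end.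

End Games.

(* Bondareva-Shapley: a vector x vanishing at the empty set and at N lies in
   C exactly when it is dominated by an additive vector a with a(N) = 0.  This
   is proved from Farkas' lemma, an arbitrary balanced collection being split
   into minimal ones.  Hence the lineality space consists of the additive
   vectors, which are spanned by the w_i, and subtracting the additive vector
   given by the singleton values splits C as Lin(C) (+) C^0.

   If x is extremal in C^0, take such an a.  Either a_i > 0 for some i <> n,
   and then x - a_i r_i still lies in C^0; or a = 0, so x <= 0, and for T with
   x(T) < 0 the vector x - x(T) delta_T lies in C^0.  Extremality makes x a
   multiple of the ray taken off.  Conversely every generator has the form
   g = L - delta_S0 with L additive.  A minimal balanced collection avoiding S0
   is tight for g, hence for both summands of any splitting g = y + z, and
   tightness on the partitions {T} + singletons, {T, ~T} and on the
   co-singletons propagates y = a g from S0 and the singletons to every T. *)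

From HB Require Import structures.
From mathcomp Require Import all_boot all_order all_algebra.
From mathcomp Require Import reals ring lra zify.
From Stdlib Require Import Classical.
Import Order.TTheory GRing.Theory Num.Theory.
Local Open Scope ring_scope.
Set Implicit Arguments. Unset Strict Implicit. Unset Printing Implicit Defensive.

Section Farkas.
Variables (R : realFieldType) (V : lmodType R).
Implicit Types (g : V -> R).

Definition farkas_alternative (I : eqType) (s : seq I) (F : I -> V -> R) g :=
  (exists x, (forall i, i \in s -> F i x <= 0) /\ 0 < g x) \/
  (exists2 lam : I -> R, forall i, 0 <= lam i &
     forall z, g z = \sum_(i <- s) lam i * F i z).

Lemma farkas_nil (I : eqType) (F : I -> V -> R) g : scalar g ->
  farkas_alternative [::] F g.
Proof.
move=> hg; case: (classic (exists x, g x != 0)) => [[x gx0]|g0].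
  left; case: (ltrgtP (g x) 0) => [gx|gx|gx]; last by rewrite gx eqxx in gx0.
    by exists (- x); split => //; rewrite -scaleN1r (scalable_linear hg) /= mulN1r oppr_gt0.
  by exists x.
right; exists (fun=> 0) => // z; rewrite big_nil.
by apply/eqP/negPn/negP => gz; apply: g0; exists z.
Qed.

(* Fourier-Motzkin elimination of the constraint [i0] along a direction [x]
   on which it is positive. *)
Lemma farkas_cons (I : eqType) (i0 : I) (s : seq I) :
  i0 \notin s ->
  (forall F g, (forall i, scalar (F i)) -> scalar g -> farkas_alternative s F g) ->
  forall F g, (forall i, scalar (F i)) -> scalar g -> farkas_alternative (i0 :: s) F g.
Proof.
move=> i0s IH F g hF hg.
have drop_i0 a (lam : I -> R) z : \sum_(i <- s) (if i == i0 then a else lam i) * F i z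
    = \sum_(i <- s) lam i * F i z.
  by apply: eq_big_seq => i iS; case: eqP iS i0s => // -> ->.
have [[x [Fx gx]]|[lam lam0 glam]] := IH F g hF hg; last first.
  right; exists (fun i => if i == i0 then 0 else lam i) => [i|z].
    by case: eqP.
  by rewrite big_cons eqxx mul0r add0r drop_i0.
have [Fx0|Fx0] := lerP (F i0 x) 0.
  by left; exists x; split => // i; rewrite in_cons => /predU1P [->|]; last exact: Fx.
set f0 := F i0 x in Fx0.
pose F' i v := F i v - F i x / f0 * F i0 v.
pose g' v := g v - g x / f0 * F i0 v.
have hF' i : scalar (F' i) by move=> c u v; rewrite /F' (hF i) (hF i0); ring.
have hg' : scalar g' by move=> c u v; rewrite /g' hg (hF i0); ring.
have [[y [Fy gy]]|[mu mu0 gmu]] := IH F' g' hF' hg'.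
  left; exists ((- (F i0 y / f0)) *: x + y); split; last by rewrite hg; move: gy; rewrite /g'; lra.
  move=> i; rewrite in_cons => /predU1P [->|iS].
    by rewrite hF -/f0 mulNr divfK ?gt_eqF // addNr.
  by rewrite hF; have := Fy i iS; rewrite /F'; lra.
pose c := (g x - \sum_(j <- s) mu j * F j x) / f0.
right; exists (fun i => if i == i0 then c else mu i) => [i|z].
  case: eqP => // _; apply: divr_ge0; last exact: ltW.
  suff : \sum_(j <- s) mu j * F j x <= 0 by lra.
  by rewrite big_seq sumr_le0 // => j js; rewrite mulr_ge0_le0 ?Fx.
rewrite big_cons eqxx drop_i0.
have e : \sum_(i <- s) mu i * F' i z =
    \sum_(i <- s) mu i * F i z - (\sum_(i <- s) mu i * F i x) / f0 * F i0 z.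
  by rewrite !mulr_suml -sumrB; apply: eq_bigr => i _; rewrite /F'; ring.
have := gmu z; rewrite e /g' => ez.
have -> : g z = g x / f0 * F i0 z + (\sum_(i <- s) mu i * F i z -
    (\sum_(i <- s) mu i * F i x) / f0 * F i0 z) by rewrite -ez; ring.
by rewrite /c; field; rewrite gt_eqF.
Qed.

Lemma farkas (I : eqType) (s : seq I) (F : I -> V -> R) g :
  uniq s -> (forall i, scalar (F i)) -> scalar g -> farkas_alternative s F g.
Proof.
elim: s F g => [|i0 s IH] F g; first by move=> _ _; apply: farkas_nil.
by case/andP => i0s us; apply: farkas_cons => // F' g'; apply: IH.
Qed.

End Farkas.

Section Games.
Variables (R : realType) (n : nat).
Implicit Types (B : {set {set 'I_n}}) (S T : {set 'I_n}) (x y : vec R n)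
  (lam mu : {set 'I_n} -> R) (a : 'I_n -> R).

Definition nontrivial S := (S != set0) && (S != setT).

Lemma vecB x y T : (x - y) T = x T - y T.
Proof. by rewrite !ffunE. Qed.

Lemma vecZ (c : R) x T : (c *: x) T = c * x T.
Proof. by rewrite ffunE. Qed.

Definition bsum B lam x : R := \sum_(S in B) lam S * x S.

Lemma bsum_is_scalar B lam : scalar (bsum B lam).
Proof.
move=> c x y; rewrite /bsum mulr_sumr -big_split.
by apply: eq_bigr => S _; rewrite !ffunE /= /GRing.scale /=; ring.
Qed.

HB.instance Definition _ B lam :=
  GRing.isLinear.Build R (vec R n) R *%R (bsum B lam) (bsum_is_scalar B lam).

Lemma CconeD x y : Ccone x -> Ccone y -> Ccone (x + y).
Proof.
move=> [[x0 xT] hx] [[y0 yT] hy]; split; first by split; rewrite ffunE ?x0 ?xT ?y0 ?yT addr0.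
move=> B lam hB hw; have := hx B lam hB hw; have := hy B lam hB hw.
by rewrite -!/(bsum B lam _) raddfD; lra.
Qed.

Lemma CconeZ c x : 0 <= c -> Ccone x -> Ccone (c *: x).
Proof.
move=> c0 [[x0 xT] hx]; split; first by split; rewrite ffunE ?x0 ?xT scaler0.
move=> B lam hB hw; rewrite -/(bsum B lam _) linearZ /=.
exact: mulr_ge0_le0 (hx B lam hB hw).
Qed.

Lemma bsum_Lin l B lam : Lin (@Ccone R n) l -> Bstar R B -> balancing_weights B lam ->
  bsum B lam l = 0.
Proof.
move=> [[_ hl] [_ hl']] hB hw; have := hl B lam hB hw; have := hl' B lam hB hw.
by rewrite -!/(bsum B lam _) raddfN /=; lra.
Qed.

Lemma Bstar_nontrivial B S : Bstar R B -> S \in B -> nontrivial S.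
Proof.
move=> [[[hB0 _] minB] BT] SB; rewrite /nontrivial hB0 //=.
apply: contraNneq BT => eST; apply/negPn/negP => neq.
apply: (minB [set setT]); first by rewrite properEneq eq_sym neq sub1set -eST SB.
split=> [S'|]; first by rewrite in_set1 => /eqP ->; rewrite -eST hB0.
exists (fun=> 1); split=> // i.
rewrite (eq_bigl (pred1 setT)) ?big_pred1_eq // => S' /=.
by rewrite in_set1 andb_idr // => /eqP ->; rewrite in_setT.
Qed.

Lemma partition_Bstar B : B != [set setT] -> {in B, forall S, S != set0} ->
  (forall i, exists2 S, S \in B & i \in S) ->
  (forall i, {in B &, forall S1 S2, i \in S1 -> i \in S2 -> S1 = S2}) ->
  Bstar R B /\ balancing_weights B (fun=> 1 : R).
Proof.
move=> BT hne hcov huniq.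
have hw : balancing_weights B (fun=> 1 : R).
  split=> // i; have [S SB iS] := hcov i.
  rewrite (eq_bigl (pred1 S)) ?big_pred1_eq // => S' /=.
  by apply/andP/eqP => [[S'B iS']|->]; [exact: huniq iS' iS | split].
do !split=> //; first by exists (fun=> 1).
move=> B' /properP [sub [S SB SnB']] [_ [mu [_ hmu]]].
have /set0Pn [i iS] := hne S SB.
have := hmu i; rewrite big_pred0 => [/esym/eqP|S']; first by rewrite oner_eq0.
apply/andP => -[S'B' iS']; move: SnB'.
by rewrite -(huniq i S' S (subsetP sub _ S'B') SB iS' iS) S'B'.
Qed.

Definition part_singletons T : {set {set 'I_n}} := T |: [set [set j] | j in ~: T].

Lemma part_singletonsP S T : S \in part_singletons T ->
  S = T \/ exists2 j, S = [set j] & j \notin T.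
Proof.
by rewrite in_setU1 => /predU1P [->|/imsetP [j jT ->]]; [left | right; exists j; rewrite -?in_setC].
Qed.

Lemma part_singletons_Bstar T : nontrivial T ->
  Bstar R (part_singletons T) /\ balancing_weights (part_singletons T) (fun=> 1 : R).
Proof.
case/andP => T0 TT; have TP : T \in part_singletons T := setU11 _ _.
have block S i : S \in part_singletons T -> i \in S -> S = if i \in T then T else [set i].
  case/part_singletonsP => [->|[j -> jT]]; first by move=> ->.
  by move=> /set1P ->; rewrite (negbTE jT).
apply: partition_Bstar.
- by apply: contraNneq TT => e; move: TP; rewrite e in_set1.
- by move=> S /part_singletonsP [->|[j -> _]]; last by apply/set0Pn; exists j; rewrite set11.
- move=> i; case iT: (i \in T); first by exists T.
  exists [set i]; rewrite ?set11 // in_setU1; apply/orP; right.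
  by apply: imset_f; rewrite in_setC iT.
- by move=> i S1 S2 h1 h2 i1 i2; rewrite (block _ _ h1 i1) (block _ _ h2 i2).
Qed.

Lemma sum_part_singletons (f : {set 'I_n} -> R) T : T != set0 ->
  \sum_(S in part_singletons T) f S = f T + \sum_(j in ~: T) f [set j].
Proof.
case/set0Pn => k kT; rewrite big_setU1 /=; last first.
  by apply/imsetP => -[j]; rewrite in_setC => jT eT; move: kT jT; rewrite eT set11 => /set1P.
by rewrite big_imset // => i j _ _; apply: set1_inj.
Qed.

Lemma Ccone_part_singletons x T : Ccone x -> nontrivial T ->
  x T + \sum_(j in ~: T) x [set j] <= 0.
Proof.
move=> [_ hx] hT; have [hB hw] := part_singletons_Bstar hT.
have := hx _ _ hB hw; rewrite (sum_part_singletons (fun S => 1 * x S)); last by case/andP: hT.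
by rewrite mul1r; under eq_bigr do rewrite mul1r.
Qed.

Definition part_compl T : {set {set 'I_n}} := [set T; ~: T].

Lemma part_compl_Bstar T : nontrivial T ->
  Bstar R (part_compl T) /\ balancing_weights (part_compl T) (fun=> 1 : R).
Proof.
case/andP => T0 TT; have TP : T \in part_compl T by rewrite !inE eqxx.
have block S i : S \in part_compl T -> i \in S -> S = if i \in T then T else ~: T.
  by rewrite !inE => /orP [] /eqP -> => [->|]; rewrite ?inE => // /negbTE ->.
apply: partition_Bstar.
- by apply: contraNneq TT => e; move: TP; rewrite e in_set1.
- move=> S; rewrite !inE => /orP [] /eqP -> //.
  by apply: contraNneq TT => /(congr1 (@setC _)); rewrite setCK setC0 => ->.
- move=> i; case iT: (i \in T); first by exists T.
  by exists (~: T); rewrite ?inE ?eqxx ?orbT ?iT.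
- by move=> i S1 S2 h1 h2 i1 i2; rewrite (block _ _ h1 i1) (block _ _ h2 i2).
Qed.

Definition cosingletons : {set {set 'I_n}} := [set [set~ j] | j : 'I_n].

Lemma cosingletons_Bstar : (1 < n)%N ->
  Bstar R cosingletons /\ balancing_weights cosingletons (fun=> (n.-1)%:R^-1 : R).
Proof.
move=> hn; have n1 : (0 < n.-1)%N by case: n hn => [|[]].
have cardC1 (j : 'I_n) : #|[set~ j]| = n.-1 by rewrite cardsC1 card_ord.

have CCP S : S \in cosingletons -> exists j, S = [set~ j].
  by case/imsetP => j _ ->; exists j.
have hw : balancing_weights cosingletons (fun=> (n.-1)%:R^-1 : R).
  split=> [S _|i]; first by rewrite invr_gt0 ltr0n.
  rewrite big_mkcondr big_imset /=; last by move=> j k _ _ /setC_inj /set1_inj.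
  rewrite -big_mkcondr (eq_bigl [in [set~ i]]) => [|j]; last by rewrite !inE eq_sym.
  by rewrite sumr_const cardC1 -[_ *+ _]mulr_natr mulVf // pnatr_eq0 -lt0n.
split=> //; split; last first.
  pose j0 : 'I_n := Ordinal (ltnW hn).
  apply/eqP => e; have : [set~ j0] \in cosingletons by apply: imset_f.
  by rewrite e in_set1 -subTset => /subsetP /(_ j0 (in_setT j0)); rewrite !inE eqxx.
split; first split=> [S /CCP [j ->]|]; first by rewrite -cards_eq0 cardC1 -lt0n.
  by exists (fun=> (n.-1)%:R^-1).
move=> B' /properP [sub [_ /CCP [k ->] kB']] [_ [mu [mu0 hmu]]].
have memk S : S \in B' -> k \in S.
  move=> SB; have [j eS] := CCP S (subsetP sub _ SB); subst S.
  by rewrite !inE; apply: contraNneq kB' => ->.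
have tot : \sum_(S in B') mu S = 1.
  by rewrite -(hmu k); apply: eq_bigl => S; apply/idP/andP => [SB|[]//]; rewrite memk.
have [e|[S SB]] := set_0Vmem B'.
  by move: tot; rewrite e big_set0 => /esym/eqP; rewrite oner_eq0.
have [j eS] := CCP S (subsetP sub _ SB); subst S.
move: tot; rewrite (bigID (fun S => j \in S)) /= hmu (bigD1 [set~ j]) /=; last first.
  by rewrite SB !inE eqxx.
have := mu0 _ SB; have : 0 <= \sum_(S | (S \in B') && (j \notin S) && (S != [set~ j])) mu S.
  by apply: sumr_ge0 => S /andP [/andP [SB' _] _]; apply/ltW/mu0.
lra.
Qed.

Definition wsupport lam := [set S | 0 < lam S].

Definition nonneg_balancing (c : R) lam :=
  [/\ forall S, 0 <= lam S, forall S, 0 < lam S -> nontrivial S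
    & forall i : 'I_n, \sum_(S : {set 'I_n} | i \in S) lam S = c].

Lemma sum_wsupport lam (P : pred {set 'I_n}) (G : {set 'I_n} -> R) :
  (forall S, ~~ (0 < lam S) -> G S = 0) ->
  \sum_(S in wsupport lam | P S) G S = \sum_(S | P S) G S.
Proof.
move=> G0; rewrite big_mkcondl; apply: eq_bigr => S _.
by rewrite inE; case: ifP => // /negbT /G0.
Qed.

Lemma nonneg_balancing_weights c lam : nonneg_balancing c lam -> wsupport lam != set0 ->
  0 < c /\ balancing_weights (wsupport lam) (fun S => lam S / c).
Proof.
case=> lam0 lamnt hc /set0Pn [S1]; rewrite inE => lS1.
have /andP [/set0Pn [i1 i1S1] _] := lamnt _ lS1.
have c0 : 0 < c.
  rewrite -(hc i1) (bigD1 S1) //=.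
  have : 0 <= \sum_(S : {set 'I_n} | (i1 \in S) && (S != S1)) lam S by apply: sumr_ge0.
  lra.
split=> //; split=> [S|i]; first by rewrite inE => lS; apply: divr_gt0.
rewrite -mulr_suml sum_wsupport ?hc ?mulfV ?gt_eqF // => S lS.
by apply/eqP; rewrite eq_le lam0 andbT leNgt.
Qed.

Lemma Ccone_wsum_le0_minimal x c lam : Ccone x -> nonneg_balancing c lam ->
  wsupport lam != set0 -> minimal_balanced R (wsupport lam) -> \sum_S lam S * x S <= 0.
Proof.
move=> [_ hx] hlam supp0 hmin; have [lam0 lamnt _] := hlam.
have [c0 hw] := nonneg_balancing_weights hlam supp0.
have hB : Bstar R (wsupport lam).
  split=> //; apply/eqP => e; have : setT \in wsupport lam by rewrite e set11.
  by rewrite inE => /lamnt; rewrite /nontrivial eqxx andbF.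
have := hx _ _ hB hw; rewrite -big_condT sum_wsupport => [|S lS]; last first.
  by rewrite (_ : lam S = 0) ?mul0r //; apply/eqP; rewrite eq_le lam0 andbT leNgt.
under eq_bigr do rewrite mulrAC.
by rewrite -mulr_suml pmulr_lle0 // invr_gt0.
Qed.

Definition extend0 B mu S : R := if S \in B then mu S else 0.

Lemma extend0_balancing B c lam mu : B \subset wsupport lam -> nonneg_balancing c lam ->
  balancing_weights B mu -> nonneg_balancing 1 (extend0 B mu) /\ wsupport (extend0 B mu) = B.
Proof.
move=> sub [_ lamnt _] [mu0 hmu].
have supp : wsupport (extend0 B mu) = B.
  by apply/setP => S; rewrite inE /extend0; case: ifP => [/mu0 ->|]; rewrite ?ltxx.
split=> //; split=> [S|S lS|i].
- by rewrite /extend0; case: ifP => // /mu0 /ltW.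
- have : S \in wsupport (extend0 B mu) by rewrite inE.
  by rewrite supp => /(subsetP sub); rewrite inE => /lamnt.
- by rewrite /extend0 -big_mkcondl; apply: hmu.
Qed.

(* Decrease [lam] along [mu] until a first weight vanishes. *)
Lemma balancing_split x c lam B mu : nonneg_balancing c lam ->
  B \proper wsupport lam -> balancing_weights B mu ->
  exists t lam', [/\ 0 < t, nonneg_balancing (c - t) lam',
    wsupport lam' \proper wsupport lam &
    \sum_S lam S * x S = \sum_S lam' S * x S + t * \sum_S extend0 B mu S * x S].
Proof.
move=> hlam pB hmu; have [lam0 lamnt hc] := hlam; have [mu0 hmu1] := hmu.
have sub := proper_sub pB; have [[mu'0 _ hmu'] _] := extend0_balancing sub hlam hmu.
have [S1 S1B] : exists S1, S1 \in B.
  have [_ [S SP _]] := properP pB; rewrite inE in SP.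
  have /andP [/set0Pn [i iS] _] := lamnt S SP.
  have [e|[S1 S1B]] := set_0Vmem B; last by exists S1.
  have := hmu1 i; rewrite big_pred0 => [/esym/eqP|S']; first by rewrite oner_eq0.
  by rewrite e in_set0.
have [S0 S0B' Smin] := arg_minP (fun S => lam S / mu S) S1B.
have S0B : S0 \in B := S0B'.
set t := lam S0 / mu S0.
have lamS0 : 0 < lam S0 by have := subsetP sub _ S0B; rewrite inE.
pose lam' S := lam S - t * extend0 B mu S.
have lam'_le S : lam' S <= lam S by rewrite /lam' gerBl mulr_ge0 ?mu'0 ?divr_ge0 ?ltW ?mu0.
exists t, lam'; split.
- by rewrite divr_gt0 ?mu0.
- split=> [S|S|i].
  + rewrite /lam' /extend0; case: ifP => [SB|]; last by rewrite mulr0 subr0.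
    by rewrite subr_ge0 -ler_pdivlMr ?mu0 ?Smin.
  + by move=> /lt_le_trans /(_ (lam'_le S)) /lamnt.
  + by rewrite /lam' sumrB -mulr_sumr hc hmu' mulr1.
- rewrite properE; apply/andP; split.
    by apply/subsetP => S; rewrite !inE => /lt_le_trans; apply.
  apply/subsetPn; exists S0; rewrite !inE //.
  by rewrite /lam' /extend0 S0B /t divfK ?subrr ?ltxx // gt_eqF ?mu0.
- by rewrite mulr_sumr -big_split; apply: eq_bigr => S _; rewrite /= /lam' mulrBl mulrA subrK.
Qed.

Lemma Ccone_wsum_le0 x c lam : Ccone x -> nonneg_balancing c lam ->
  \sum_S lam S * x S <= 0.
Proof.
move=> hx; have [k] := ubnP #|wsupport lam|; elim: k c lam => // k IH c lam hk hlam.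
have [lam0 lamnt _] := hlam.
have [supp0|supp0] := eqVneq (wsupport lam) set0.
  rewrite big1 // => S _; have : S \notin wsupport lam by rewrite supp0 in_set0.
  by rewrite inE -leNgt => lS; rewrite (_ : lam S = 0) ?mul0r //; apply/eqP; rewrite eq_le lS lam0.
have [c0 hw] := nonneg_balancing_weights hlam supp0.
case: (classic (minimal_balanced R (wsupport lam))) => [|hnmin].
  exact: Ccone_wsum_le0_minimal hx hlam supp0.
have [B [pB [_ [mu hmu]]]] : exists B, B \proper wsupport lam /\ balanced R B.
  apply: NNPP => hno; apply: hnmin; split=> [|B pB hB]; last by apply: hno; exists B.
  by split=> [S|]; [rewrite inE => /lamnt /andP [] | exists (fun S => lam S / c)].
have [t [lam' [t0 hlam' plam' ->]]] := balancing_split x hlam pB hmu.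
have [hmu' suppmu] := extend0_balancing (proper_sub pB) hlam hmu.
rewrite ltnS in hk.
have h1 : \sum_S lam' S * x S <= 0 by apply: IH hlam'; exact: leq_trans (proper_card plam') hk.
have h2 : \sum_S extend0 B mu S * x S <= 0.
  by apply: IH hmu'; rewrite suppmu; exact: leq_trans (proper_card pB) hk.
have := mulr_ge0_le0 (ltW t0) h2; lra.
Qed.

Definition core x a := \sum_i a i = 0 /\ forall S, nontrivial S -> x S <= \sum_(i in S) a i.

Lemma bsum_additive B lam a : balancing_weights B lam ->
  \sum_(S in B) lam S * \sum_(i in S) a i = \sum_i a i.
Proof.
move=> [_ hl]; under eq_bigr do rewrite mulr_sumr big_mkcond.
rewrite exchange_big; apply: eq_bigr => i _.
by rewrite -big_mkcondr -mulr_suml hl mul1r.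
Qed.

Lemma core_Ccone x a : restricted x -> core x a -> Ccone x.
Proof.
move=> rx [sa hx]; split=> // B lam hB hw.
apply: le_trans (_ : \sum_(S in B) lam S * \sum_(i in S) a i <= 0).
  apply: ler_sum => S SB; rewrite ler_pM2l ?hx ?(Bstar_nontrivial hB) //.
  by case: hw => + _; apply.
by rewrite bsum_additive // sa.
Qed.

Lemma sum_indicator (P : pred 'I_n) j : \sum_(i | P i) ((i == j)%:R : R) = (P j)%:R.
Proof.
have [Pj|Pj] := boolP (P j); last by rewrite big1 // => i Pi; case: eqP Pi Pj => // -> ->.
by rewrite (bigD1 j) //= eqxx big1 ?addr0 // => i /andP [_ /negbTE ->].
Qed.

(* The core inequalities, homogenised by a scale [v.2] of [x], as linear
   functionals of [v = (a, s)]; [inr b] encodes [(-1)^b * a(N) <= 0]. *)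
Definition core_constraint x (k : {set 'I_n} + bool)
    (v : {ffun 'I_n -> R^o} * R^o) : R :=
  match k with
  | inl A => if nontrivial A then v.2 * x A - \sum_(i in A) v.1 i else 0
  | inr b => (-1) ^+ b * \sum_i v.1 i
  end.

Lemma core_constraint_scalar x k : scalar (core_constraint x k).
Proof.
have sumD (P : pred 'I_n) c (u v : {ffun 'I_n -> R^o} * R^o) :
    \sum_(i | P i) (c *: u + v).1 i = c * \sum_(i | P i) u.1 i + \sum_(i | P i) v.1 i.
  by rewrite mulr_sumr -big_split; apply: eq_bigr => i _; rewrite !ffunE.
move=> c u v; case: k => [S|b] /=; rewrite sumD; last by ring.
by case: (nontrivial S) => /=; rewrite /GRing.scale /=; ring.
Qed.

Lemma sum_core_constraint x (lam : {set 'I_n} + bool -> R) v :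
  \sum_k lam k * core_constraint x k v =
  \sum_S (if nontrivial S then lam (inl S) else 0) * (v.2 * x S - \sum_(i in S) v.1 i)
  + (lam (inr false) - lam (inr true)) * \sum_i v.1 i.
Proof.
rewrite big_sumType big_bool /= expr0 expr1 mul1r mulN1r; congr (_ + _); last by ring.
by apply: eq_bigr => S _; case: (nontrivial S); rewrite ?mulr0 ?mul0r.
Qed.

Lemma core_dual_infeasible x (lam : {set 'I_n} + bool -> R) : Ccone x ->
  (forall k, 0 <= lam k) -> ~ (forall v, v.2 = \sum_k lam k * core_constraint x k v).
Proof.
move=> hx lam0 hlam.
pose lam' S := if nontrivial S then lam (inl S) else 0.
pose c := lam (inr false) - lam (inr true).
have hlam' : nonneg_balancing c lam'.
  split=> [S|S|j]; rewrite /lam'; first by case: ifP.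
    by case: ifP => //; rewrite ltxx.
  have := hlam ([ffun i => (i == j)%:R], 0); rewrite sum_core_constraint /=.
  have e1 P : \sum_(i | P i) [ffun i => ((i == j)%:R : R^o)] i = (P j)%:R.
    by rewrite -sum_indicator; apply: eq_bigr => i _; rewrite ffunE.
  rewrite e1 /= mulr1; under eq_bigr do rewrite e1 mul0r sub0r mulrN.
  rewrite sumrN -/c; under [X in _ = - X + _ -> _]eq_bigr do rewrite mulr_natr mulrb.
  by move=> h; rewrite big_mkcond /=; lra.
have := Ccone_wsum_le0 hx hlam'; have := hlam (0, 1); rewrite sum_core_constraint /=.
have zero P : \sum_(i | P i) (0 : {ffun 'I_n -> R^o}) i = 0.
  by rewrite big1 // => i _; rewrite ffunE.
under eq_bigr do rewrite zero mul1r subr0.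
by rewrite zero mulr0 addr0 => <-; rewrite ler10.
Qed.

Lemma Ccone_core x : Ccone x -> exists a, core x a.
Proof.
move=> hx.
have [[v [hv v2]]|[lam lam0 hlam]] := farkas (index_enum_uniq _)
  (core_constraint_scalar x) (fun c u v => erefl : (c *: u + v).2 = c * u.2 + v.2).
  exists (fun i => v.1 i / v.2); split.
    rewrite -mulr_suml; have := hv (inr true); have := hv (inr false).
    rewrite !mem_index_enum /= expr0 expr1; move=> /(_ isT) h1 /(_ isT) h2.
    by rewrite (_ : \sum_i v.1 i = 0) ?mul0r //; lra.
  move=> S hS; have := hv (inl S) (mem_index_enum _); rewrite /= hS.
  by rewrite -mulr_suml ler_pdivlMr // mulrC; lra.
by case: (core_dual_infeasible hx lam0) => v; rewrite hlam.
Qed.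

End Games.

Section LastPlayer.
Variables (R : realType) (n : nat) (p : 'I_n).
Hypothesis hn : (1 < n)%N.
Implicit Types (x y z l : vec R n) (a c : 'I_n -> R) (S T : {set 'I_n}).

Lemma sum_setT (f : 'I_n -> R) : \sum_(i in setT) f i = \sum_i f i.
Proof. by apply: eq_bigl => i; rewrite in_setT. Qed.

Lemma sum_setC (f : 'I_n -> R) T : \sum_(i in T) f i + \sum_(i in ~: T) f i = \sum_i f i.
Proof. by rewrite [RHS](bigID [in T]) /=; congr (_ + _); apply: eq_bigl => i; rewrite inE. Qed.

Lemma set1_nontrivial (j : 'I_n) : nontrivial [set j].
Proof.
rewrite /nontrivial -cards_eq0 cards1 /=; apply: contraTneq hn => e.
by rewrite -(card_ord n) -cardsT -e cards1.
Qed.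

Definition additive_game a : vec R n := [ffun T : {set 'I_n} => \sum_(i in T) a i].

Lemma Ccone_additive a : \sum_i a i = 0 -> Ccone (additive_game a).
Proof.
move=> sa; apply: (@core_Ccone _ _ _ a); first by split; rewrite ffunE ?big_set0 ?sum_setT.
by split=> // S _; rewrite ffunE.
Qed.

Lemma Lin_additive a : \sum_i a i = 0 -> Lin (@Ccone R n) (additive_game a).
Proof.
move=> sa; split; first exact: Ccone_additive.
have -> : - additive_game a = additive_game (fun i => - a i).
  by apply/ffunP => T; rewrite !ffunE sumrN.
by apply: Ccone_additive; rewrite sumrN sa oppr0.
Qed.

Lemma Lin_singletons x : Lin (@Ccone R n) x ->
  \sum_i x [set i] = 0 /\ x = additive_game (fun i => x [set i]).
Proof.
move=> [hx hNx]; have [[x0 xT] _] := hx.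
have part T : nontrivial T -> x T + \sum_(j in ~: T) x [set j] = 0.
  move=> hT; have := Ccone_part_singletons hx hT; have := Ccone_part_singletons hNx hT.
  rewrite ffunE; under eq_bigr do rewrite ffunE; rewrite sumrN; lra.
have sx : \sum_i x [set i] = 0.
  by have := part _ (set1_nontrivial p); rewrite -(sum_setC _ [set p]) big_set1.
split=> //; apply/ffunP => T; rewrite ffunE.
have [->|T0] := eqVneq T set0; first by rewrite x0 big_set0.
have [->|TT] := eqVneq T setT; first by rewrite xT sum_setT.
have := part T; rewrite /nontrivial T0 TT => /(_ isT).
by have := sum_setC (fun i => x [set i]) T; rewrite sx; lra.
Qed.

Definition wcomb c : vec R n := \sum_(i | i != p) c i *: w R p i.

Definition wcoef c i := if i == p then - \sum_(j | j != p) c j else c i.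

Lemma sum_wcoef c : \sum_i wcoef c i = 0.
Proof.
rewrite (bigD1 p) //= /wcoef eqxx addrC (eq_bigr c) ?subrr // => i.
by move/negbTE ->.
Qed.

Lemma wE i T : w R p i T = (i \in T)%:R - (p \in T)%:R.
Proof. by rewrite ffunE; case: (i \in T); case: (p \in T); rewrite ?subrr ?subr0. Qed.

Lemma wcombE c : wcomb c = additive_game (wcoef c).
Proof.
apply/ffunP => T; rewrite sum_ffunE !ffunE [RHS]big_mkcond [RHS](bigD1 p) //= /wcoef eqxx.
under eq_bigr do rewrite ffunE wE /GRing.scale /= mulrBr.
rewrite sumrB -mulr_suml addrC; congr (_ + _).
  by apply: eq_bigr => i /negbTE ->; case: (i \in T); rewrite ?mulr1 ?mulr0.
by case: (p \in T); rewrite ?mulr1 ?mulr0 ?oppr0.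
Qed.

Lemma Lin_wcomb c : Lin (@Ccone R n) (wcomb c).
Proof. by rewrite wcombE; apply/Lin_additive/sum_wcoef. Qed.

Lemma wcomb_set1 c j : j != p -> wcomb c [set j] = c j.
Proof. by move=> jp; rewrite wcombE ffunE big_set1 /wcoef (negbTE jp). Qed.

Lemma LinP x : Lin (@Ccone R n) x <-> exists c, x = wcomb c.
Proof.
split=> [hx|[c ->]]; last exact: Lin_wcomb.
have [sx ->] := Lin_singletons hx; exists (fun i => x [set i]).
rewrite wcombE; apply/ffunP => T; rewrite !ffunE; apply: eq_bigr => i _.
by rewrite /wcoef; case: eqP => // ->; move: sx; rewrite (bigD1 p) //=; lra.
Qed.

Lemma wcomb_eq0 c : wcomb c = 0 -> forall i, i != p -> c i = 0.
Proof. by move=> c0 i ip; rewrite -(wcomb_set1 c ip) c0 ffunE. Qed.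

Lemma Ccone_decomp x : Ccone x -> exists l y, [/\ Lin (@Ccone R n) l, C0 p y & x = l + y].
Proof.
move=> hx; have hl := Lin_wcomb (fun i => x [set i]).
exists (wcomb (fun i => x [set i])), (x - wcomb (fun i => x [set i])); split.
- exact: hl.
- by split=> [|j jp]; [apply: CconeD hx hl.2 | rewrite !ffunE wcomb_set1 ?subrr].
- by rewrite addrC subrK.
Qed.

Lemma decomp_unique l y l' y' : Lin (@Ccone R n) l -> C0 p y ->
  Lin (@Ccone R n) l' -> C0 p y' -> l + y = l' + y' -> l = l' /\ y = y'.
Proof.
move=> /LinP [c ->] [_ y0] /LinP [c' ->] [_ y'0] e.
have cc' : wcomb c = wcomb c'.
  apply: eq_bigr => i ip; congr (_ *: _).
  have := congr1 (fun v : vec R n => v [set i]) e.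
  by rewrite !ffunE y0 // y'0 // !addr0 !wcomb_set1.
by split=> //; move: e; rewrite cc' => /addrI.
Qed.

Lemma bsum_u_last B lam : Bstar R B -> balancing_weights B lam -> bsum B lam (u_last R p) = 1.
Proof.
move=> hB [_ hw]; rewrite /bsum -(hw p) big_mkcondr; apply: eq_bigr => S SB.
have /andP [_ ST] := Bstar_nontrivial hB SB.
by rewrite ffunE ST andbT; case: (p \in S); rewrite ?mulr1 ?mulr0.
Qed.

Lemma bsum_game_of alpha x B lam : Bstar R B ->
  \sum_(S in B) lam S * game_of alpha x S = bsum B lam x.
Proof.
move=> hB; apply: eq_bigr => S SB; have /andP [S0 ST] := Bstar_nontrivial hB SB.
by rewrite ffunE (negbTE S0) (negbTE ST).
Qed.

Lemma BG_Ccone alpha x : BG alpha x <-> Ccone (x - alpha *: u_last R p).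
Proof.
have restrE : restricted (x - alpha *: u_last R p) <-> restricted x.
  by rewrite /restricted !ffunE in_set0 eqxx andbF scaler0 !subr0.
have bsumE B lam : Bstar R B -> balancing_weights B lam ->
    bsum B lam (x - alpha *: u_last R p) = bsum B lam x - alpha.
  by move=> hB hw; rewrite linearB linearZ /= bsum_u_last // mulr1.
split=> -[rx hx]; split; try exact/restrE.
  move=> B lam hB hw; rewrite -/(bsum _ _ _) bsumE //.
  by have := hx B lam hB hw; rewrite bsum_game_of //; lra.
move=> B lam hB hw; rewrite bsum_game_of //.
by have := hx B lam hB hw; rewrite -/(bsum _ _ _) bsumE //; lra.
Qed.

Lemma deltaE S T : nontrivial S -> delta R S T = (T == S)%:R.
Proof. by case/andP => S0 ST; rewrite ffunE; case: eqP => // ->; rewrite S0 ST. Qed.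

Lemma bsum_delta B lam S : nontrivial S -> bsum B lam (delta R S) = if S \in B then lam S else 0.
Proof.
move=> hS; rewrite /bsum; under eq_bigr do rewrite deltaE // mulr_natr mulrb.
rewrite -big_mkcondr; case: ifP => SB.
  by rewrite (big_pred1 S) // => T; rewrite /= andb_idl // => /eqP ->.
by rewrite big_pred0 // => T; case: eqP => [->|]; rewrite ?SB ?andbF.
Qed.

Lemma Ccone_ndelta S : nontrivial S -> Ccone (- delta R S).
Proof.
move=> hS; split; first by split; rewrite !ffunE eqxx /= ?andbF oppr0.
move=> B lam hB hw; rewrite -/(bsum _ _ _) linearN /= bsum_delta // oppr_le0.
by case: ifP => // SB; rewrite ltW //; case: hw => + _; apply.
Qed.

Lemma C0Z (c : R) y : 0 <= c -> C0 p y -> C0 p (c *: y).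
Proof. by move=> c0 [hy y0]; split=> [|j jp]; [exact: CconeZ | rewrite ffunE y0 // scaler0]. Qed.

Lemma C0_ndelta S : nontrivial S -> (forall j, j != p -> S != [set j]) -> C0 p (- delta R S).
Proof.
move=> hS hSj; split=> [|j jp]; first exact: Ccone_ndelta.
by rewrite ffunE deltaE // eq_sym (negbTE (hSj j jp)) oppr0.
Qed.

Lemma w_wcomb i : i != p -> w R p i = wcomb (fun j => (j == i)%:R).
Proof.
move=> ip; rewrite /wcomb (bigD1 i) //= eqxx scale1r big1 ?addr0 // => j /andP [_ /negbTE ->].
by rewrite scale0r.
Qed.

Lemma r_playerE i : i != p -> r_player R p i = w R p i - delta R [set i].
Proof.
move=> ip; rewrite /r_player (negbTE ip); apply/ffunP => T; rewrite !ffunE.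
have [->|Ti] := eqVneq T [set i].
  case/andP: (set1_nontrivial i) => /negbTE -> /negbTE ->.
  by rewrite !in_set1 eqxx cards1 [p == i]eq_sym (negbTE ip) /= !subr0 subrr.
rewrite /= subr0; case iT: (i \in T) => //=.
suff -> : (1 < #|T|)%N by rewrite andbT.
have /subsetPn [j jT ji] : ~~ (T \subset [set i]) by rewrite eqEsubset sub1set iT andbT in Ti.
by apply/card_gt1P; exists i, j; rewrite iT jT eq_sym -in_set1.
Qed.

Lemma C0_r i : i != p -> C0 p (w R p i - delta R [set i]).
Proof.
move=> ip; split=> [|j jp].
  apply: CconeD (Ccone_ndelta (set1_nontrivial i)).
  by rewrite w_wcomb //; case: (Lin_wcomb (fun j => (j == i)%:R : R)).
rewrite ffunE wE ffunE deltaE ?set1_nontrivial // !in_set1 (inj_eq set1_inj).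
by rewrite [p == j]eq_sym (negbTE jp) subr0 [j == i]eq_sym subrr.
Qed.

End LastPlayer.

Section RaySplit.
Variables (R : realType) (n : nat) (p : 'I_n).
Hypothesis hn : (1 < n)%N.
Variables (L : vec R n) (S0 : {set 'I_n}) (y z : vec R n) (a : R).
Hypotheses (hL : Lin (@Ccone R n) L) (hS0 : nontrivial S0) (hg : C0 p (L - delta R S0))
  (hy : C0 p y) (hz : C0 p z) (hyz : L - delta R S0 = y + z).

Implicit Types (B : {set {set 'I_n}}) (lam : {set 'I_n} -> R) (S T : {set 'I_n}).

Local Notation g := (L - delta R S0).
Local Notation agree T := (y T = a * g T).

Lemma bsum_tight B lam : Bstar R B -> balancing_weights B lam -> S0 \notin B -> bsum B lam g = 0.
Proof. by move=> hB hw S0B; rewrite linearB /= bsum_Lin // bsum_delta // (negbTE S0B) subrr. Qed.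

(* On a tight collection [y] and [z] are tight as well, so one equality
   [y S = a * g S] is forced by all the others. *)
Lemma agree_tight B lam T : Bstar R B -> balancing_weights B lam -> S0 \notin B -> T \in B ->
  {in B, forall S, S != T -> agree S} -> agree T.
Proof.
move=> hB hw S0B TB hS.
have y0 : bsum B lam y = 0.
  have := hy.1.2 B lam hB hw; have := hz.1.2 B lam hB hw.
  have := bsum_tight hB hw S0B; rewrite hyz linearD /= -!/(bsum B lam _); lra.
have : \sum_(S in B) lam S * (y S - a * g S) = 0.
  under eq_bigr do rewrite mulrBr mulrCA.
  by rewrite sumrB -mulr_sumr -!/(bsum B lam _) y0 bsum_tight // mulr0 subrr.
rewrite (bigD1 T) //= big1 ?addr0 => [|S /andP [SB ST]]; last by rewrite hS // subrr mulr0.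
by move/eqP; rewrite mulf_eq0 (gt_eqF (hw.1 T TB)) /= subr_eq0 => /eqP.
Qed.

Lemma agree_off_p j : j != p -> agree [set j].
Proof. by move=> jp; rewrite hy.2 // hg.2 // mulr0. Qed.

Lemma agree_part_singletons T : nontrivial T -> S0 \notin part_singletons T ->
  (forall j, j \notin T -> agree [set j]) -> agree T.
Proof.
move=> hT S0B hj; have [hB hw] := part_singletons_Bstar R hT.
apply: agree_tight hB hw S0B (setU11 _ _) _ => S /part_singletonsP [->|[j -> jT]].
  by rewrite eqxx.
by move=> _; apply: hj.
Qed.

Hypotheses (agree_p : agree [set p]) (agree_S0 : agree S0).

Lemma agree_set1 j : agree [set j].
Proof. by have [->|jp] := eqVneq j p; [exact: agree_p | exact: agree_off_p]. Qed.

Lemma agree_trivial T : ~~ nontrivial T -> agree T.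
Proof.
have [[y0 yT] _] := hy.1; have [[[g0 gT] _] _] := hg.
by rewrite /nontrivial negb_and !negbK => /orP [] /eqP ->; rewrite ?y0 ?g0 ?yT ?gT mulr0.
Qed.

Lemma agree_outside T : (forall q, S0 = [set q] -> q \in T) -> agree T.
Proof.
move=> hq; have [hT|/agree_trivial //] := boolP (nontrivial T).
have [<-|TS0] := eqVneq S0 T; first exact: agree_S0.
apply: agree_part_singletons hT _ (fun j _ => agree_set1 j).
apply/negP => /part_singletonsP [eT|[q eq qT]]; first by rewrite eT eqxx in TS0.
by have := hq q eq; rewrite (negbTE qT).
Qed.

Lemma agree_all T : agree T.
Proof.
have [hT|/agree_trivial //] := boolP (nontrivial T).
case: (boolP [exists q, (S0 == [set q]) && (q \notin T)]) => [|none]; last first.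
  apply: agree_outside => q eS0; apply: contraNT none => qT.
  by apply/existsP; exists q; rewrite eS0 eqxx qT.
case/existsP => q /andP [/eqP eS0 qT].
have outC : agree (~: T).
  by apply: agree_outside => q'; rewrite eS0 => /set1_inj <-; rewrite inE.
have [eC|neC] := eqVneq (~: T) [set q].
  have eT : T = [set~ q] by rewrite -eC setCK.
  case: (boolP (S0 \in cosingletons n)) => [/imsetP [j _ ej]|S0C].
    have /setC_inj -> : ~: T = ~: [set j] by rewrite eC -eS0 ej.
    exact: agree_set1.
  have [hB hw] := cosingletons_Bstar R hn.
  apply: agree_tight hB hw S0C _ _; first by rewrite eT; apply/imsetP; exists q.
  move=> S /imsetP [j _ ->] Sj; apply: agree_outside => q'; rewrite eS0 => /set1_inj <-.
  by rewrite !inE; apply: contraNneq Sj => <-; rewrite eT.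
have [hB hw] := part_compl_Bstar R hT.
apply: agree_tight hB hw _ _ _; last 2 first.
- by rewrite !inE eqxx.
- by move=> S; rewrite !inE => /orP [] /eqP -> //; rewrite eqxx.
rewrite eS0 !inE negb_or [_ == ~: T]eq_sym neC andbT.
by apply: contraNneq qT => <-; rewrite set11.
Qed.

Lemma ray_split : 0 <= a /\ y = a *: g.
Proof.
have ya : y = a *: g by apply/ffunP => T; rewrite ffunE agree_all.
split=> //; have [hB hw] := part_singletons_Bstar R hS0.
have gm1 : bsum (part_singletons S0) (fun=> 1) g = -1.
  by rewrite linearB /= bsum_Lin // bsum_delta // setU11 sub0r.
have := hy.1.2 _ _ hB hw; rewrite -/(bsum _ _ y) ya linearZ /= gm1.
by rewrite mulrN1 oppr_le0.
Qed.

End RaySplit.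

Section Extreme.
Variables (R : realType) (n : nat).
Implicit Types (x y z g : vec R n) (S T : {set 'I_n}).

Lemma neq0_of_val g T : g T = -1 -> g != 0.
Proof.
move=> gT; apply/eqP => g0; move: gT; rewrite g0 ffunE => /eqP.
by rewrite eq_sym oppr_eq0 oner_eq0.
Qed.

Lemma extreme_ray_of_split (K : vec R n -> Prop) g :
  (forall (c : R) y, 0 <= c -> K y -> K (c *: y)) -> K g -> g != 0 ->
  (forall y z, K y -> K z -> g = y + z -> exists2 a : R, 0 <= a & y = a *: g) ->
  forall t : R, 0 < t -> extreme_ray K (t *: g).
Proof.
move=> KZ hg g0 hsplit t t0; split; first exact/KZ/hg/ltW.
split; first by rewrite scaler_eq0 negb_or g0 gt_eqF.
move=> y z hy hz e; have ti : 0 <= t^-1 by rewrite invr_ge0 ltW.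
have e' : g = t^-1 *: y + t^-1 *: z by rewrite -scalerDr -e scalerA mulVf ?scale1r ?gt_eqF.
have [a a0 ya] := hsplit _ _ (KZ _ _ ti hy) (KZ _ _ ti hz) e'.
have [b b0 zb] := hsplit _ _ (KZ _ _ ti hz) (KZ _ _ ti hy) (etrans e' (addrC _ _)).
exists a, b; split=> //.
  by rewrite scalerA mulrC -scalerA -ya scalerA mulfV ?gt_eqF // scale1r.
by rewrite scalerA mulrC -scalerA -zb scalerA mulfV ?gt_eqF // scale1r.
Qed.

Lemma extreme_ray_summand (K : vec R n -> Prop) x y z g (c : R) : extreme_ray K x ->
  K y -> K z -> x = y + z -> y = c *: g -> 0 < c -> g != 0 -> exists2 t : R, 0 < t & x = t *: g.
Proof.
move=> [_ [_ hext]] hy hz e yc c0 g0; have [al [_ [al0 _ yal _]]] := hext y z hy hz e.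
have aln : al != 0.
  apply/eqP => al00; move: yal; rewrite al00 scale0r yc => /eqP.
  by rewrite scaler_eq0 (negbTE g0) orbF gt_eqF.
exists (al^-1 * c); first by rewrite mulr_gt0 // invr_gt0 lt_neqAle eq_sym aln.
by rewrite -scalerA -yc yal scalerA mulVf // scale1r.
Qed.

Lemma Lin0 : Lin (@Ccone R n) 0.
Proof.
suff h0 : Ccone (0 : vec R n) by rewrite /Lin oppr0.
apply: (@core_Ccone _ _ _ (fun=> 0)).
  by split; rewrite ffunE.
by split=> [|S _]; rewrite big1 // ffunE.
Qed.

Variables (p : 'I_n).
Hypothesis hn : (1 < n)%N.

Lemma r_at_p j : j != p -> (w R p j - delta R [set j]) [set p] = -1.
Proof.
move=> jp; rewrite vecB wE deltaE ?set1_nontrivial // !in_set1 eqxx (negbTE jp).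
by rewrite (inj_eq set1_inj) eq_sym (negbTE jp) sub0r subr0.
Qed.

Lemma delta_split S : (1 < #|S|)%N -> S != setT -> forall y z, C0 p y -> C0 p z ->
  - delta R S = y + z -> exists2 a : R, 0 <= a & y = a *: - delta R S.
Proof.
move=> hS ST y z hy hz e.
have nS : nontrivial S by rewrite /nontrivial ST andbT -cards_eq0 -lt0n ltnW.
have hg : C0 p (- delta R S).
  by apply: C0_ndelta => // j _; apply: contraTneq hS => ->; rewrite cards1.
have gS : (- delta R S) S = -1 by rewrite ffunE deltaE // eqxx.
rewrite -[- delta R S]sub0r in e hg gS *.
have agree_S : y S = - y S * (0 - delta R S) S by rewrite gS mulrN1 opprK.
have agree_p : y [set p] = - y S * (0 - delta R S) [set p].
  apply: (agree_part_singletons Lin0 nS hy hz e (set1_nontrivial hn p)).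
    by apply/negP => /part_singletonsP [eS|[j eS _]]; move: hS; rewrite eS cards1.
  by move=> j; rewrite in_set1 => jp; apply: (agree_off_p _ hg hy).
by have [a0 ya] := ray_split hn Lin0 nS hg hy hz e agree_p agree_S; exists (- y S).
Qed.

Lemma singleton_split q L : Lin (@Ccone R n) L -> C0 p (L - delta R [set q]) ->
  (L - delta R [set q]) [set p] = -1 -> forall y z, C0 p y -> C0 p z ->
  L - delta R [set q] = y + z -> exists2 a : R, 0 <= a & y = a *: (L - delta R [set q]).
Proof.
move=> hL hg gp y z hy hz e.
have agree_p : y [set p] = - y [set p] * (L - delta R [set q]) [set p].
  by rewrite gp mulrN1 opprK.
have agree_q : y [set q] = - y [set p] * (L - delta R [set q]) [set q].
  by move: agree_p; case: (eqVneq q p) => [<-|qp] // _; apply: (agree_off_p _ hg hy qp).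
have [a0 ya] := ray_split hn hL (set1_nontrivial hn q) hg hy hz e agree_p agree_q.
by exists (- y [set p]).
Qed.

Lemma gen_extreme k (t : R) : valid_index k -> 0 < t -> extreme_ray (C0 p) (t *: gen R p k).
Proof.
case: k => [S /andP [hS ST]|i _] t0 /=.
  have nS : nontrivial S by rewrite /nontrivial ST andbT -cards_eq0 -lt0n ltnW.
  apply: (extreme_ray_of_split (@C0Z _ _ p) _ _ (delta_split hS ST) t0).
    by apply: C0_ndelta => // j _; apply: contraTneq hS => ->; rewrite cards1.
  by apply: (@neq0_of_val _ S); rewrite ffunE deltaE // eqxx.
have [->|ip] := eqVneq i p.
  have hg : C0 p (0 - delta R [set p]).
    rewrite sub0r; apply: C0_ndelta; first exact: set1_nontrivial.
    by move=> j jp; rewrite eq_sym (inj_eq set1_inj).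
  have gp : (0 - delta R [set p]) [set p] = -1.
    by rewrite vecB deltaE ?set1_nontrivial // eqxx ffunE sub0r.
  rewrite /r_player eqxx -sub0r.
  exact: (extreme_ray_of_split (@C0Z _ _ p) hg (neq0_of_val gp) (singleton_split Lin0 hg gp) t0).
have hL : Lin (@Ccone R n) (w R p i) by rewrite w_wcomb //; apply: Lin_wcomb.
have hg := C0_r R hn ip; have gp := r_at_p ip.
rewrite r_playerE //.
exact: (extreme_ray_of_split (@C0Z _ _ p) hg (neq0_of_val gp) (singleton_split hL hg gp) t0).
Qed.

Lemma C0_sub_player x a j : C0 p x -> core x a -> j != p ->
  C0 p (x - a j *: (w R p j - delta R [set j])).
Proof.
move=> [hx x0] [sa ha] jp; have [[[r0 rT] _] rs] := C0_r R hn jp; have [[x0' xT] _] := hx.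
split=> [|k kp]; last by rewrite vecB vecZ x0 // rs // mulr0 subr0.
apply: (core_Ccone (a := fun i => a i - a j * wcoef p (fun k => (k == j)%:R) i)).
  by split; rewrite vecB vecZ ?r0 ?rT ?x0' ?xT mulr0 subr0.
split=> [|S hS]; first by rewrite sumrB -mulr_sumr sum_wcoef mulr0 subr0.
rewrite sumrB -mulr_sumr vecB vecZ vecB w_wcomb // wcombE ffunE deltaE ?set1_nontrivial //.
have := ha S hS; have [->|_] := eqVneq S [set j]; last by rewrite mulr0n subr0; lra.
by rewrite x0 // big_set1 mulr1n; lra.
Qed.

Lemma C0_sub_delta x T : C0 p x -> (forall S, nontrivial S -> x S <= 0) -> nontrivial T ->
  (forall j, j != p -> T != [set j]) -> C0 p (x - (- x T) *: - delta R T).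
Proof.
move=> [hx x0] xle hT Tj; have [[x0' xT] _] := hx.
split=> [|k kp].
  apply: (core_Ccone (a := fun=> 0)).
    by split; rewrite vecB vecZ ffunE ?x0' ?xT ffunE eqxx /= ?andbF oppr0 mulr0 subr0.
  split=> [|S hS]; rewrite big1 // vecB vecZ ffunE deltaE //.
  have [->|_] := eqVneq S T; last by rewrite mulr0n oppr0 mulr0 subr0 xle.
  by rewrite mulr1n mulrNN mulr1 subrr.
rewrite vecB vecZ x0 // ffunE deltaE // eq_sym (negbTE (Tj k kp)).
by rewrite oppr0 mulr0 subr0.
Qed.

Lemma extreme_C0_player x a j : extreme_ray (C0 p) x -> core x a -> j != p -> 0 < a j ->
  exists2 t : R, 0 < t & x = t *: r_player R p j.
Proof.
move=> hext ha jp aj; rewrite r_playerE //.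
apply: (extreme_ray_summand hext (C0Z (ltW aj) (C0_r R hn jp)) (C0_sub_player hext.1 ha jp)).
- by rewrite addrC subrK.
- by [].
- by [].
- exact: neq0_of_val (r_at_p jp).
Qed.

Lemma extreme_C0_nonpos x : extreme_ray (C0 p) x -> (forall S, nontrivial S -> x S <= 0) ->
  exists k, valid_index k /\ exists2 t : R, 0 < t & x = t *: gen R p k.
Proof.
move=> hext xle; have [[hx x0] [xn0 _]] := hext; have [[x0' xT'] _] := hx.
have /existsP [T xT] : [exists T, x T != 0].
  by apply: contraNT xn0 => /existsPn h; apply/eqP/ffunP => T; rewrite ffunE; apply/eqP/negPn.
have hT : nontrivial T.
  by rewrite /nontrivial; apply/andP; split; apply: contraNneq xT => ->; rewrite ?x0' ?xT'.
have xTlt : x T < 0 by rewrite lt_neqAle xT xle.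
have Tj j : j != p -> T != [set j] by move=> jp; apply: contraNneq xT => ->; rewrite x0.
have [t t0 ->] : exists2 t : R, 0 < t & x = t *: - delta R T.
  have xT0 : 0 <= - x T by rewrite oppr_ge0 ltW.
  apply: (extreme_ray_summand hext (C0Z xT0 (C0_ndelta R hT Tj)) (C0_sub_delta hext.1 xle hT Tj)).
  - by rewrite addrC subrK.
  - by [].
  - by rewrite oppr_gt0.
  - by apply: (@neq0_of_val _ T); rewrite ffunE deltaE // eqxx.
have [hT1|] := ltnP 1 #|T|.
  by exists (inl T); split; [rewrite /= hT1; case/andP: hT | exists t].
rewrite leq_eqVlt ltnS leqn0 cards_eq0 (negbTE (proj1 (andP hT))) orbF => /cards1P [j eT].
have -> : T = [set p] by rewrite eT; case: (eqVneq j p) => [-> //|/Tj]; rewrite eT eqxx.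
by exists (inr p); split=> //; exists t => //=; rewrite /r_player eqxx.
Qed.

Lemma extreme_C0_gen x : extreme_ray (C0 p) x ->
  exists k, valid_index k /\ exists2 t : R, 0 < t & x = t *: gen R p k.
Proof.
move=> hext; have [a ha] := Ccone_core hext.1.1.
have [/existsP [j /andP [jp aj]]|none] := boolP [exists j, (j != p) && (0 < a j)].
  by have [t t0 xt] := extreme_C0_player hext ha jp aj; exists (inr j); split=> //; exists t.
have aj0 j : j != p -> a j = 0.
  move=> jp; have := ha.2 _ (set1_nontrivial hn j); rewrite hext.1.2 // big_set1 => aj.
  apply/eqP; rewrite eq_le aj andbT leNgt; apply: contraNN none => aj0.
  by apply/existsP; exists j; rewrite jp.
have a0 i : a i = 0.
  have [->|/aj0 //] := eqVneq i p; have := ha.1; rewrite (bigD1 p) //= big1 ?addr0 //.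
apply: extreme_C0_nonpos hext _ => S hS.
by have := ha.2 S hS; rewrite big1.
Qed.

End Extreme.

Lemma extreme_rayP (R : realType) n (p : 'I_n) : (1 < n)%N -> forall x : vec R n,
  extreme_ray (C0 p) x <-> exists k, valid_index k /\ exists t : R, 0 < t /\ x = t *: gen R p k.
Proof.
move=> hn x; split=> [/(extreme_C0_gen hn) [k [hk [t t0 xt]]]|[k [hk [t [t0 ->]]]]].
  by exists k; split=> //; exists t.
exact: gen_extreme.
Qed.

Section Count.
Local Open Scope nat_scope.

Lemma card_valid_index n : 1 < n ->
  #|[set k : {set 'I_n} + 'I_n | valid_index k]| = 2 ^ n - 2.
Proof.
move=> hn; rewrite -sum1_card big_sumType /=.
have -> : \sum_(i < n | inr i \in [set k : {set 'I_n} + 'I_n | valid_index k]) 1 = n.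
  by rewrite -[RHS]card_ord -sum1_card; apply: eq_bigl => i; rewrite !inE.
have -> : \sum_(A | inl A \in [set k : {set 'I_n} + 'I_n | valid_index k]) 1 =
    \sum_(A : {set 'I_n} | (1 < #|A|) && (A != setT)) 1 by apply: eq_bigl => A; rewrite inE.
have card_k k : \sum_(A : {set 'I_n} | #|A| == k) 1 = 'C(n, k).
  by rewrite sum1dep_card card_draws card_ord.
have tot : \sum_(A : {set 'I_n}) 1 = 2 ^ n.
  rewrite -[in RHS](card_ord n) -cardsT -card_powerset powersetT -sum1_card.
  by apply: eq_bigl => A; rewrite in_setT.
have kinds (A : {set 'I_n}) : 1 = (if (1 < #|A|) && (A != setT) then 1 else 0) +
    (if A == setT then 1 else 0) + (if #|A| == 0 then 1 else 0) + (if #|A| == 1 then 1 else 0).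
  have [->|_] := eqVneq A setT.
    by rewrite cardsT card_ord andbF (gtn_eqF hn) (gtn_eqF (ltnW hn)).
  by rewrite andbT; case: #|A| => [|[|m]].
rewrite (eq_bigr _ (fun A _ => kinds A)) !big_split -!big_mkcond /= in tot.
rewrite big_pred1_eq !card_k bin0 bin1 in tot.
have h2 : 2 <= 2 ^ n by rewrite (leq_exp2l 1) // ltnW.
by apply: (@addIn 2); rewrite subnK // -tot addnAC -!addnA.
Qed.

End Count.

Theorem theorem6 (R : realType) (n : nat) (hn : (1 < n)%N) (alpha : R) :
  let p := lastp hn in
  (* BG_alpha(n) = alpha u_{n} + C_alpha(n) *)
  (forall x : vec R n, BG alpha x <-> Ccone (x - alpha *: u_last R p)) /\
  (* the lineality space is spanned by the linearly independent w_1..w_{n-1} *)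
  (forall x : vec R n, Lin (@Ccone R n) x <->
     exists c : 'I_n -> R, x = \sum_(i | i != p) c i *: w R p i) /\
  (forall c : 'I_n -> R, \sum_(i | i != p) c i *: w R p i = 0 ->
     forall i, i != p -> c i = 0) /\
  (* C_alpha(n) = Lin(C_alpha(n)) (+) C^0_alpha(n) *)
  (forall x : vec R n, Ccone x ->
     exists l y, [/\ Lin (@Ccone R n) l, C0 p y & x = l + y]) /\
  (forall l y l' y' : vec R n, Lin (@Ccone R n) l -> C0 p y ->
     Lin (@Ccone R n) l' -> C0 p y' -> l + y = l' + y' -> l = l' /\ y = y') /\
  (* the extremal rays of C^0 are exactly those of r_S (|S|>1, S <> N),
     r_i (i <> n) and r_n *)
  (forall x : vec R n, extreme_ray (C0 p) x <->
     exists k, valid_index k /\ exists t : R, 0 < t /\ x = t *: gen R p k) /\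
  (* counting: (2^n - n - 2) + n rays of C^0, plus 2n-2 rays of the lineality space *)
  #|[set k : {set 'I_n} + 'I_n | valid_index k]| = (2 ^ n - 2)%N /\
  (2 * (n - 1) + #|[set k : {set 'I_n} + 'I_n | valid_index k]| = 2 ^ n + 2 * n - 4)%N.
Proof.
move=> p; split; first exact: BG_Ccone.
split; first exact: LinP.
split; first exact: wcomb_eq0.
split; first exact: Ccone_decomp.
split; first exact: decomp_unique.
split; first exact: extreme_rayP.
rewrite card_valid_index //; split=> //.
have : (2 ^ 1 <= 2 ^ n)%N by rewrite leq_exp2l // ltnW.
by rewrite expn1; lia.
Qed.
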